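(* Let $A$ be an integral domain with field of fractions $K$. Every sublocalization over $A$ is a localization of $A$ if and only if for each $x\in K\setminus A$ the ideal $\sqrt{(A:_A x)}$ is the radical of a principal ideal. Moreover, if each principal ideal of $A$ has only finitely many associated primes, then every sublocalization over $A$ is a localization of $A$ if and only if each associated prime of a principal ideal of $A$ is the radical of a principal ideal.
   Context: $(A:_A x)=\{a\in A: ax\in A\}$. An overring of $A$ is a subring of $K$ containing $A$; it is a localization of $A$ if it equals $S^{-1}A$ for a multiplicatively closed set $S$ of nonzero elements of $A$, and a sublocalization over $A$ if it is an intersection of localizations of $A$. A prime $P$ of $A$ is an associated prime of an ideal $I$ if there is $a\in A$ such that $P$ is a minimal prime over $(I:_A a)=\{r\in A: ra\in I\}$. *)

From HB Require Import structures.
From mathcomp Require Import all_boot all_order all_algebra fraction.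
Set Implicit Arguments. Unset Strict Implicit. Unset Printing Implicit Defensive.
Import GRing.Theory.
Local Open Scope ring_scope.

Section Defs.
Variable A : idomainType.
Local Notation K := {fraction A}.

Definition inA (x : K) : Prop := exists a : A, x = tofrac a.

Definition colonA (x : K) : A -> Prop := fun a => inA (tofrac a * x).

Definition mult_closed_nz (S : A -> Prop) : Prop :=
  S 1 /\ (forall s t, S s -> S t -> S (s * t)) /\ ~ S 0.

Definition locset (S : A -> Prop) : K -> Prop :=
  fun x => exists a s, S s /\ x = tofrac a / tofrac s.

Definition is_localization (B : K -> Prop) : Prop :=
  exists S, mult_closed_nz S /\ forall x, B x <-> locset S x.

Definition is_sublocalization (B : K -> Prop) : Prop :=
  exists F : (K -> Prop) -> Prop,
    (forall C, F C -> is_localization C) /\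
    forall x, B x <-> (forall C, F C -> C x).

Definition principal (b : A) : A -> Prop := fun a => exists c, a = c * b.

Definition radical (I : A -> Prop) : A -> Prop := fun a => exists n, I (a ^+ n).

Definition same_ideal (I J : A -> Prop) : Prop := forall a, I a <-> J a.

Definition is_ideal (I : A -> Prop) : Prop :=
  I 0 /\ (forall a b, I a -> I b -> I (a + b)) /\ (forall r a, I a -> I (r * a)).

Definition is_prime_ideal (P : A -> Prop) : Prop :=
  is_ideal P /\ ~ P 1 /\ (forall a b, P (a * b) -> P a \/ P b).

Definition colon_ideal (I : A -> Prop) (a : A) : A -> Prop := fun r => I (r * a).

Definition minimal_prime_over (J P : A -> Prop) : Prop :=
  is_prime_ideal P /\ (forall a, J a -> P a) /\
  (forall Q, is_prime_ideal Q -> (forall a, J a -> Q a) ->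
     (forall a, Q a -> P a) -> forall a, P a -> Q a).

Definition associated_prime (I P : A -> Prop) : Prop :=
  exists a, minimal_prime_over (colon_ideal I a) P.

Definition finitely_many_assoc (I : A -> Prop) : Prop :=
  exists (n : nat) (Ps : nat -> A -> Prop),
    forall P, associated_prime I P -> exists i, (i < n)%N /\ same_ideal P (Ps i).

End Defs.

From HB Require Import structures.
From mathcomp Require Import all_boot all_order all_algebra fraction generic_quotient.
From mathcomp Require Import ring boolp classical_sets.
Import GRing.Theory.
Local Open Scope ring_scope.
Local Open Scope classical_set_scope.
Set Implicit Arguments. Unset Strict Implicit. Unset Printing Implicit Defensive.

(* If every sublocalization is a localization, apply this to the intersection
   of the rings A[1/y], y a nonzero element of (A :_A x): it is S^-1 A, so
   x = a/t with t in S, and 1/t in A[1/y] means y^k in tA; hence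
   rad (A :_A x) = rad (tA).  Conversely, if rad (A :_A x) = rad (bA), then 1/b
   lies in every localization containing x (a denominator s of x has a power
   in bA), so a sublocalization B is T^-1 A for T = {t | 1/t in B}.
   With finitely many associated primes, (A :_A a/d) = (dA : a) has finitely
   many minimal primes, all associated to dA, and its radical is the radical of
   the product of their generators.  Conversely, for P minimal over (bA : a),
   pick u outside P in every associated prime of bA not contained in P; for N
   large the minimal primes of (bA : u^N a) avoid u, so P = rad (A :_A u^N a/b). *)

Lemma Zorn_nonempty (T : Type) (G : set T) (R : T -> T -> Prop) (x0 : T) :
  G x0 -> (forall x, R x x) -> (forall x y z, R x y -> R y z -> R x z) ->
  (forall F, F `<=` G -> F !=set0 -> total_on F R ->
     exists2 b, G b & forall x, F x -> R x b) ->
  exists2 m, G m & forall y, G y -> R m y -> R y m.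
Proof.
move=> Gx0 Rrefl Rtrans chainP.
pose RG (x y : {x | G x}) := `[< R (sval x) (sval y) >].
have [[m Gm] mmax] : exists m, premaximal RG m.
  apply: (ZL_preorder (exist _ x0 Gx0)) => [x|x y z /asboolP Rxy /asboolP Ryz|F Ftot].
  - exact/asboolP.
  - exact/asboolP/(Rtrans _ _ _ Rxy Ryz).
  have [[x Fx]|F0] := pselect (F !=set0); last first.
    by exists (exist _ x0 Gx0) => x Fx; case: F0; exists x.
  have [b Gb bmax] : exists2 b, G b & forall y, (sval @` F) y -> R y b.
    apply: chainP => [_ [y _ <-]||]; first exact: svalP.
    - by exists (sval x), x.
    - move=> _ _ [y Fy <-] [z Fz <-].
      by have [/asboolP|/asboolP] := Ftot y z Fy Fz; [left|right].
  by exists (exist _ b Gb) => y Fy; apply/asboolP/bmax; exists y.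
exists m => // y Gy Rmy.
by have /asboolP := mmax (exist _ y Gy) (asboolT Rmy).
Qed.

Lemma eventually_uniform n (R : nat -> nat -> Prop) :
  (forall i, exists N, forall k, (N <= k)%N -> R i k) ->
  exists N, forall i, (i < n)%N -> forall k, (N <= k)%N -> R i k.
Proof.
move=> evR; elim: n => [|n [N RN]]; first by exists 0%N.
have [M RM] := evR n; exists (maxn N M) => i; rewrite ltnS leq_eqVlt.
by move=> /predU1P[-> k|lt_in k]; rewrite geq_max => /andP[]; [move=> _ /RM | move/(RN _ lt_in)].
Qed.

Section Ideals.
Variable A : idomainType.
Implicit Types (I J P Q : set A) (a b c r s u y z : A).

Lemma same_idealE I J : same_ideal I J -> I = J.
Proof. by move=> IJ; apply/funext => a; apply/propext. Qed.

Lemma principal_ideal b : is_ideal (principal b).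
Proof.
split; first by exists 0; rewrite mul0r.
split; first by move=> _ _ [c ->] [d ->]; exists (c + d); rewrite mulrDl.
by move=> r _ [c ->]; exists (r * c); rewrite mulrA.
Qed.

Lemma colon_ideal_ideal I a : is_ideal I -> is_ideal (colon_ideal I a).
Proof.
move=> [I0 [ID IM]]; split; first by rewrite /colon_ideal mul0r.
split; first by move=> r s Ir Is; rewrite /colon_ideal mulrDl; apply: ID.
by move=> r s Is; rewrite /colon_ideal -mulrA; apply: IM.
Qed.

Lemma colon_idealM I a b : colon_ideal (colon_ideal I a) b = colon_ideal I (b * a).
Proof. by apply/funext => r; rewrite /colon_ideal mulrA. Qed.

Lemma sub_colon_ideal I a : is_ideal I -> I `<=` colon_ideal I a.
Proof. by move=> [_ [_ IM]] r Ir; rewrite /colon_ideal mulrC; apply: IM. Qed.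

Lemma prime_idealX P y n : is_prime_ideal P -> P (y ^+ n) -> P y.
Proof.
move=> [[P0 _] [P1 PM]]; elim: n => [|n IHn]; first by rewrite expr0.
by rewrite exprS => /PM [].
Qed.

Lemma sub_radical I : I `<=` radical I.
Proof. by move=> a Ia; exists 1%N; rewrite expr1. Qed.

Lemma radical_sub_prime I P : is_prime_ideal P -> I `<=` P -> radical I `<=` P.
Proof. by move=> Pp IP a [n /IP]; apply: prime_idealX. Qed.

Lemma bigcup_chain_ideal (F : set (set A)) :
  F !=set0 -> (forall X, F X -> is_ideal X) -> total_on F subset ->
  is_ideal (\bigcup_(X in F) X).
Proof.
move=> [X0 FX0] Fid Ftot; split; first by exists X0; case: (Fid _ FX0).
split.
- move=> a b [X FX Xa] [Y FY Yb].
  have [XY|YX] := Ftot X Y FX FY.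
  + by exists Y => //; have [_ [YD _]] := Fid _ FY; apply: YD => //; apply: XY.
  + by exists X => //; have [_ [XD _]] := Fid _ FX; apply: XD => //; apply: YX.
- by move=> r a [X FX Xa]; exists X => //; have [_ [_ XM]] := Fid _ FX; apply: XM.
Qed.

Lemma bigcap_chain_prime (F : set (set A)) :
  F !=set0 -> (forall X, F X -> is_prime_ideal X) -> total_on F subset ->
  is_prime_ideal (\bigcap_(X in F) X).
Proof.
move=> [X0 FX0] Fp Ftot; split; [split; [|split]|split].
- by move=> X /Fp [[]].
- by move=> a b Fa Fb X FX; have [[_ [XD _]] _] := Fp _ FX; apply: XD; [apply: Fa|apply: Fb].
- by move=> r a Fa X FX; have [[_ [_ XM]] _] := Fp _ FX; apply: XM; apply: Fa.
- by move=> F1; have [_ [X01 _]] := Fp _ FX0; exact: X01 (F1 _ FX0).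
move=> a b Fab.
have [Fa|/existsNP[X /not_implyP[FX nXa]]] := pselect ((\bigcap_(X in F) X) a).
  by left.
right => Y FY; have [_ [_ XP]] := Fp _ FX; have [_ [_ YP]] := Fp _ FY.
have [XY|YX] := Ftot X Y FX FY.
- by case: (XP _ _ (Fab _ FX)) => // /XY.
- by case: (YP _ _ (Fab _ FY)) => // /YX.
Qed.

Section Avoiding.
Variable M : set A.
Hypothesis M1 : M 1.
Hypothesis MM : forall s t, M s -> M t -> M (s * t).

Lemma maximal_avoiding_prime Q :
  is_ideal Q -> (forall a, Q a -> ~ M a) ->
  (forall Q', is_ideal Q' -> Q `<=` Q' -> (forall a, Q' a -> ~ M a) -> Q' `<=` Q) ->
  is_prime_ideal Q.
Proof.
move=> Qid QM Qmax; have [Q0 [QD QMul]] := Qid.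
split; [done | split; first by move/QM].
have meetM c : ~ Q c -> exists q r, Q q /\ M (q + r * c).
  move=> nQc; apply: (contra_notP _ nQc) => noM.
  pose Qc := fun z => exists q r, Q q /\ z = q + r * c.
  have Qcid : is_ideal Qc.
    split; first by exists 0, 0; rewrite mul0r addr0.
    split.
    - move=> _ _ [q [r [Qq ->]]] [q' [r' [Qq' ->]]].
      by exists (q + q'), (r + r'); split; [exact: QD | ring].
    - move=> t _ [q [r [Qq ->]]].
      by exists (t * q), (t * r); split; [exact: QMul | ring].
  have QQc : Q `<=` Qc by move=> q Qq; exists q, 0; rewrite mul0r addr0.
  have QcM a : Qc a -> ~ M a by move=> [q [r [Qq ->]]] Ma; apply: noM; exists q, r.
  by apply: (Qmax _ Qcid QQc QcM); exists 0, 1; rewrite mul1r add0r.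
move=> a b Qab.
have [|/meetM[q [r [Qq Ma]]]] := pselect (Q a); first by left.
have [|/meetM[q' [r' [Qq' Mb]]]] := pselect (Q b); first by right.
case: (QM _ _ (MM Ma Mb)).
have -> : (q + r * a) * (q' + r' * b) = (q' + r' * b) * q + (r * a * q' + r * r' * (a * b)).
  by ring.
by apply: (QD); [apply: QMul | apply: (QD); apply: QMul].
Qed.

Lemma exists_prime_avoiding J : is_ideal J -> (forall a, J a -> ~ M a) ->
  exists Q, [/\ is_prime_ideal Q, J `<=` Q & forall a, Q a -> ~ M a].
Proof.
move=> Jid JM.
pose G Q := [/\ is_ideal Q, J `<=` Q & forall a, Q a -> ~ M a].
have [Q [Qid JQ QM] Qmax] : exists2 Q, G Q & forall Q', G Q' -> Q `<=` Q' -> Q' `<=` Q.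
  apply: (@Zorn_nonempty _ G subset J) => [|X|X Y Z|F FG [X FX] Ftot].
  - by split.
  - exact: subset_refl.
  - exact: subset_trans.
  exists (\bigcup_(X in F) X) => [|Y FY a Ya]; last by exists Y.
  split; first by apply: bigcup_chain_ideal => //; [exists X | move=> Y /FG[]].
  - by move=> a Ja; exists X => //; have [_ JX _] := FG _ FX; apply: JX.
  - by move=> a [Y FY Ya]; have [_ _ YM] := FG _ FY; apply: YM.
exists Q; split => //; apply: maximal_avoiding_prime => // Q' Q'id QQ' Q'M.
by apply: Qmax => //; split => //; apply: subset_trans QQ'.
Qed.

End Avoiding.

Lemma minimal_prime_below I P : is_prime_ideal P -> I `<=` P ->
  exists2 Q, minimal_prime_over I Q & Q `<=` P.
Proof.
move=> Pp IP.
pose G Q := [/\ is_prime_ideal Q, I `<=` Q & Q `<=` P].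
have [Q [Qp IQ QP] Qmin] : exists2 Q, G Q & forall Q', G Q' -> Q' `<=` Q -> Q `<=` Q'.
  apply: (@Zorn_nonempty _ G (fun X Y => Y `<=` X) P) => [|X|X Y Z XY YZ|F FG [X FX] Ftot].
  - by split.
  - exact: subset_refl.
  - exact: subset_trans XY.
  exists (\bigcap_(X in F) X) => [|Y FY a]; last by apply.
  split.
  - apply: bigcap_chain_prime => [|Y /FG[]//|Y Z FY FZ]; first by exists X.
    by have [] := Ftot Y Z FY FZ; [right|left].
  - by move=> a Ia Y /FG[_ IY _]; apply: IY.
  - by move=> a Fa; have [_ _ XP] := FG _ FX; exact: XP (Fa _ FX).
exists Q => //; split; [done | split; [done | move=> Q' Q'p IQ' Q'Q]].
by apply: Qmin => //; split => //; apply: subset_trans QP.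
Qed.

Definition powers y : set A := fun s => exists n, s = y ^+ n.

Lemma powers1 y : powers y 1.
Proof. by exists 0%N; rewrite expr0. Qed.

Lemma powersM y s t : powers y s -> powers y t -> powers y (s * t).
Proof. by move=> [m ->] [n ->]; exists (m + n)%N; rewrite exprD. Qed.

Lemma exists_minimal_prime_avoiding I y : is_ideal I -> ~ radical I y ->
  exists2 Q, minimal_prime_over I Q & ~ Q y.
Proof.
move=> Iid nIy.
have [|P [Pp IP Py]] := exists_prime_avoiding (@powers1 y) (@powersM y) Iid.
  by move=> a Ia [n en]; apply: nIy; exists n; rewrite -en.
have [Q Qmin QP] := minimal_prime_below Pp IP.
by exists Q => // /QP Qy; apply: (Py y Qy); exists 1%N; rewrite expr1.
Qed.

Lemma radicalP I z : is_ideal I ->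
  radical I z <-> forall Q, minimal_prime_over I Q -> Q z.
Proof.
move=> Iid; split => [Iz Q [Qp [IQ _]]|minQ]; first exact: radical_sub_prime Qp IQ z Iz.
have [//|nIz] := pselect (radical I z).
by have [Q /minQ] := exists_minimal_prime_avoiding Iid nIz.
Qed.

Lemma minimal_prime_locally_nilpotent J Q y :
  is_ideal J -> minimal_prime_over J Q -> Q y ->
  exists s n, ~ Q s /\ J (y ^+ n * s).
Proof.
move=> Jid [Qp [JQ Qmin]] Qy.
have [//|noJ] := pselect (exists s n, ~ Q s /\ J (y ^+ n * s)); exfalso.
pose M z := exists n s, ~ Q s /\ z = y ^+ n * s.
have [_ [nQ1 QM]] := Qp.
have M1 : M 1 by exists 0%N, 1; rewrite expr0 mulr1.
have MM s t : M s -> M t -> M (s * t).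
  move=> [m [s' [nQs ->]]] [n [t' [nQt ->]]].
  by exists (m + n)%N, (s' * t'); split; [case/QM | rewrite exprD; ring].
have [|Q0 [Q0p JQ0 Q0M]] := exists_prime_avoiding M1 MM Jid.
  by move=> a Ja [n [s [nQs ea]]]; apply: noJ; exists s, n; rewrite -ea.
have Q0Q : Q0 `<=` Q.
  by move=> a Q0a; apply: contra_notP (Q0M _ Q0a) => nQa; exists 0%N, a; rewrite expr0 mul1r.
apply: (Q0M y (Qmin _ Q0p JQ0 Q0Q _ Qy)).
by exists 1%N, 1; rewrite expr1 mulr1.
Qed.

Lemma colon_powers_eventually_avoid I u Q : is_ideal I ->
  exists N, forall n, (N <= n)%N -> minimal_prime_over (colon_ideal I (u ^+ n)) Q -> ~ Q u.
Proof.
move=> Iid.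
have [avoid|/existsNP[n0 /not_implyP[Qmin0 /contrapT Qu]]] :=
  pselect (forall n, minimal_prime_over (colon_ideal I (u ^+ n)) Q -> ~ Q u).
  by exists 0%N => n _; apply: avoid.
have [s [m [nQs Is]]] := minimal_prime_locally_nilpotent (colon_ideal_ideal _ Iid) Qmin0 Qu.
exists (n0 + m)%N => n le_n [_ [IQ _]] _; apply: nQs; apply: IQ.
rewrite /colon_ideal.
have -> : s * u ^+ n = u ^+ (n - (n0 + m)) * (u ^+ m * s * u ^+ n0).
  by rewrite -[in LHS](subnKC le_n) !exprD; ring.
by have [_ [_ IM]] := Iid; apply: IM.
Qed.

Lemma common_element_notin_prime P n (Ps : nat -> set A) : is_prime_ideal P ->
  exists2 u, ~ P u & forall i, (i < n)%N -> is_ideal (Ps i) -> ~ Ps i `<=` P -> Ps i u.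
Proof.
move=> [_ [nP1 PM]]; elim: n => [|n [u nPu Psu]]; first by exists 1.
have [sub|/existsNP[v /not_implyP[Psv nPv]]] := pselect (Ps n `<=` P).
  by exists u => // i; rewrite ltnS leq_eqVlt => /predU1P[-> _ /(_ sub)[]|/Psu].
exists (u * v) => [/PM[]//|i]; rewrite ltnS leq_eqVlt.
move=> /predU1P[-> [_ [_ PsM]] _|lt_in Psid nsub]; first exact: PsM.
by have [_ [_ PsM]] := Psid; rewrite mulrC; apply/PsM/Psu.
Qed.

Lemma radical_principalM b c z :
  radical (principal b) z -> radical (principal c) z -> radical (principal (b * c)) z.
Proof.
move=> [m [d ed]] [n [e ee]]; exists (m + n)%N, (d * e).
by rewrite exprD ed ee; ring.
Qed.

Lemma radical_principal_of_minimal_primes I n (Ps : nat -> set A) :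
  is_ideal I ->
  (forall Q, minimal_prime_over I Q -> exists2 i, (i < n)%N & Q = Ps i) ->
  (forall Q, minimal_prime_over I Q -> exists c, Q = radical (principal c)) ->
  exists b, radical I = radical (principal b).
Proof.
move=> Iid finI radI.
have [b Ib bPs] : exists2 b, radical I `<=` radical (principal b) &
    forall i, (i < n)%N -> minimal_prime_over I (Ps i) -> Ps i b.
  elim: n {finI} => [|m [b Ib bPs]].
    by exists 1 => // z [k _]; exists k, (z ^+ k); rewrite mulr1.
  have [Qmin|nmin] := pselect (minimal_prime_over I (Ps m)); last first.
    by exists b => // i; rewrite ltnS leq_eqVlt => /predU1P[->//|/bPs].
  have [Qp [IQ _]] := Qmin; have [[_ [_ QM]] _] := Qp.
  have [c Qc] := radI _ Qmin.
  exists (c * b) => [z Iz|i].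
    by apply: radical_principalM _ (Ib _ Iz); rewrite -Qc; apply: radical_sub_prime Iz.
  rewrite ltnS leq_eqVlt => /predU1P[-> _|lt_im Psmin].
    by rewrite mulrC; apply: QM; rewrite Qc; exists 1%N, 1; rewrite expr1 mul1r.
  by have [[[_ [_ PsM]] _] _] := Psmin; apply/PsM/bPs.
exists b; apply/seteqP; split => // z [k [e ez]]; apply/radicalP => // Q Qmin.
have [i lt_in QPs] := finI _ Qmin; have [Qp _] := Qmin.
apply: (prime_idealX (n := k) Qp); rewrite ez; have [[_ [_ QM]] _] := Qp.
by apply: QM; rewrite QPs; apply: bPs; rewrite -?QPs.
Qed.

Lemma minimal_prime_radical_colon I a P n (Ps : nat -> set A) :
  is_ideal I -> minimal_prime_over (colon_ideal I a) P ->
  (forall Q, associated_prime I Q -> exists2 i, (i < n)%N & Q = Ps i) ->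
  exists2 w, ~ P w & P = radical (colon_ideal I (w * a)).
Proof.
move=> Iid Pmin finI; have [Pp [IaP Pminl]] := Pmin; have [_ [_ PM]] := Pp.
have Iaid := colon_ideal_ideal a Iid.
have [u nPu Psu] := common_element_notin_prime n Ps Pp.
have [N Nu] : exists N, forall i, (i < n)%N ->
    minimal_prime_over (colon_ideal (colon_ideal I a) (u ^+ N)) (Ps i) -> ~ Ps i u.
  have [N NPs] := eventually_uniform n (fun i => colon_powers_eventually_avoid u (Ps i) Iaid).
  by exists N => i lt_in; apply: NPs.
have nPuN : ~ P (u ^+ N) by move/(prime_idealX Pp).
exists (u ^+ N) => //; rewrite -colon_idealM; apply/seteqP; split => [z Pz|].
  apply/radicalP => [|Q Qmin]; first exact: colon_ideal_ideal.
  have [i lt_in QPs] : exists2 i, (i < n)%N & Q = Ps i.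
    by apply: finI; exists (u ^+ N * a); rewrite -colon_idealM.
  subst Q; have [Qp [IQ _]] := Qmin.
  have [QP|nQP] := pselect (Ps i `<=` P).
    by apply: Pminl Qp _ QP z Pz => r /(sub_colon_ideal (u ^+ N) Iaid); apply: IQ.
  by case: (Nu i lt_in Qmin); apply: Psu => //; case: Qp.
apply: radical_sub_prime => // r /IaP /PM[] // /nPuN.
Qed.

Lemma radical_principal0 : radical (principal (0 : A)) = [set 0].
Proof.
apply/seteqP; split => [z [n [c]]|z ->]; last by exists 1%N, 0; rewrite expr1 mulr0.
by rewrite mulr0 => /eqP; rewrite expf_eq0 => /andP[_ /eqP].
Qed.

Lemma zero_prime_ideal : is_prime_ideal [set 0 : A].
Proof.
split; first by split=> //; split=> [_ _ -> ->|r _ ->]; rewrite ?addr0 ?mulr0.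
split; first exact/eqP/oner_neq0.
by move=> a b /eqP; rewrite mulf_eq0 => /orP[] /eqP; [left|right].
Qed.

Lemma associated_prime_principal0 P :
  associated_prime (principal 0) P -> P = radical (principal (0 : A)).
Proof.
move=> [a [Pp [IP Pmin]]]; have [[P0 _] [nP1 _]] := Pp.
have a_neq0 : a != 0 by apply: contra_notN nP1 => /eqP a0; apply: IP; exists 0; rewrite a0 !mulr0.
rewrite radical_principal0; apply/seteqP; split; last by move=> _ ->.
apply: Pmin zero_prime_ideal _ _ => [r [c]|_ -> //].
by rewrite mulr0 => /eqP; rewrite mulf_eq0 (negbTE a_neq0) orbF => /eqP.
Qed.

Lemma radicalX I z n : radical I (z ^+ n) -> radical I z.
Proof. by move=> [k Ik]; exists (n * k)%N; rewrite exprM. Qed.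

Lemma finitely_many_assocP I : finitely_many_assoc I ->
  exists n (Ps : nat -> set A),
    forall Q, associated_prime I Q -> exists2 i, (i < n)%N & Q = Ps i.
Proof.
move=> [n [Ps finPs]]; exists n, Ps => Q /finPs[i [lt_in QPs]].
by exists i => //; apply: same_idealE.
Qed.

End Ideals.

Section Localizations.
Variable A : idomainType.
Local Notation K := {fraction A}.
Implicit Types (S : set A) (B : set K) (a b c d r s t y z : A) (x : K).

Lemma tofrac_inj : injective (@tofrac A).
Proof. by move=> a b /eqP; rewrite tofrac_eq => /eqP. Qed.

Lemma fracP x : exists a d, d != 0 /\ x = tofrac a / tofrac d.
Proof.
elim/quotW: x => r; exists \n_r, \d_r; split; first exact: denom_ratioP.
apply: (@mulIf _ (tofrac \d_r)); first by rewrite tofrac_eq0 denom_ratioP.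
rewrite divfK ?tofrac_eq0 ?denom_ratioP // -[_ * _]/(FracField.mul _ _) !piE.
apply/eqmodP; rewrite /= FracField.equivfE.
by rewrite !numden_Ratio ?(oner_eq0, mulf_neq0, denom_ratioP) // !mulr1 mulrC.
Qed.

Lemma colonA_frac a d : d != 0 ->
  colonA (tofrac a / tofrac d) = colon_ideal (principal d) a.
Proof.
move=> d_neq0; have dF : tofrac d != 0 :> K by rewrite tofrac_eq0.
apply/seteqP; split => r [c ec]; exists c.
  by apply: tofrac_inj; rewrite !tofracM -ec mulrA divfK.
by rewrite mulrA -tofracM ec tofracM mulfK.
Qed.

Lemma colonA_denom a d : d != 0 -> colonA (tofrac a / tofrac d) d.
Proof. by move=> d_neq0; exists a; rewrite mulrC divfK // tofrac_eq0. Qed.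

Lemma colonA_mull x r s : colonA x s -> colonA x (r * s).
Proof. by move=> [e es]; exists (r * e); rewrite tofracM -mulrA es tofracM. Qed.

Lemma colonA_neq0 x : exists2 d, d != 0 & colonA x d.
Proof. by have [a [d [d_neq0 ->]]] := fracP x; exists d => //; apply: colonA_denom. Qed.

Lemma colonA_divE x y e : y != 0 -> tofrac y * x = tofrac e -> x = tofrac e / tofrac y.
Proof. by move=> y_neq0 <-; rewrite [_ * x]mulrC mulfK // tofrac_eq0. Qed.

Lemma mult_closed_nzX S s n : mult_closed_nz S -> S s -> S (s ^+ n).
Proof.
move=> [S1 [SM _]] Ss; elim: n => [|n IHn]; first by rewrite expr0.
by rewrite exprS; apply: SM.
Qed.

Lemma mult_closed_nz_neq0 S s : mult_closed_nz S -> S s -> s != 0.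
Proof. by move=> [_ [_ S0]] Ss; apply: contra_notN S0 => /eqP <-. Qed.

Lemma powers_mult_closed_nz y : y != 0 -> mult_closed_nz (powers y).
Proof.
move=> y_neq0; split; [exact: powers1 | split; first exact: powersM].
by move=> [n /esym/eqP]; rewrite expf_eq0 (negbTE y_neq0) andbF.
Qed.

Lemma locset_tofrac S a : mult_closed_nz S -> locset S (tofrac a).
Proof. by move=> [S1 _]; exists a, 1; rewrite tofrac1 invr1 mulr1. Qed.

Lemma locset_inv S s : S s -> locset S (tofrac s)^-1.
Proof. by move=> Ss; exists 1, s; rewrite tofrac1 mul1r. Qed.

Lemma locset_mul S x1 x2 : mult_closed_nz S -> locset S x1 -> locset S x2 -> locset S (x1 * x2).
Proof.
move=> [_ [SM _]] [a [s [Ss ->]]] [b [t [St ->]]].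
by exists (a * b), (s * t); split; [exact: SM | rewrite !tofracM invfM; ring].
Qed.

Lemma locset_powers_inv y t : t != 0 ->
  locset (powers y) (tofrac t)^-1 -> radical (principal t) y.
Proof.
move=> t_neq0 [c [_ [[k ->] et]]]; exists k, c; apply: tofrac_inj.
have yk_neq0 : tofrac (y ^+ k) != 0 :> K.
  apply/eqP => yk0; move/eqP: et; rewrite yk0 invr0 mulr0 invr_eq0 tofrac_eq0.
  exact/negP.
have ec : tofrac c = tofrac (y ^+ k) / tofrac t.
  by rewrite -[tofrac c](mulfK yk_neq0) mulrAC -et mulrC.
by rewrite tofracM ec divfK // tofrac_eq0.
Qed.

Lemma locset_inv_of_colon S x y : mult_closed_nz S -> locset S x ->
  colonA x `<=` radical (principal y) -> locset S (tofrac y)^-1.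
Proof.
move=> Smc [a [s [Ss ->]]] colon_y; have s_neq0 := mult_closed_nz_neq0 Smc Ss.
have [k [c ec]] := colon_y _ (colonA_denom a s_neq0).
have c_neq0 : c != 0.
  by apply: contra_neq (expf_neq0 k s_neq0) => c0; rewrite ec c0 mul0r.
exists c, (s ^+ k); split; first exact: mult_closed_nzX.
by rewrite ec tofracM invfM mulrA divff ?mul1r // tofrac_eq0.
Qed.

Section Sublocalization.
Variable B : set K.
Hypothesis SLB : is_sublocalization B.

Lemma sublocalization_tofrac a : B (tofrac a).
Proof.
have [F [Floc BF]] := SLB; apply/BF => C /Floc[S [Smc CS]].
exact/CS/locset_tofrac.
Qed.

Lemma sublocalization_mul x1 x2 : B x1 -> B x2 -> B (x1 * x2).
Proof.
have [F [Floc BF]] := SLB; move=> /BF Bx1 /BF Bx2; apply/BF => C FC.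
have [S [Smc CS]] := Floc C FC.
by apply/CS/locset_mul => //; apply/CS; [apply: Bx1 | apply: Bx2].
Qed.

End Sublocalization.

Definition sublocalizations_are_localizations :=
  forall B : {fraction A} -> Prop, is_sublocalization B -> is_localization B.

Definition colon_radicals_principal :=
  forall x : {fraction A}, ~ inA x ->
    exists b : A, same_ideal (radical (colonA x)) (radical (principal b)).

Definition assoc_primes_radical_principal :=
  forall (b : A) (P : A -> Prop), associated_prime (principal b) P ->
    exists c : A, same_ideal P (radical (principal c)).

Lemma radical_colonA_principal_of_localizations :
  sublocalizations_are_localizations ->
  forall x, exists b, radical (colonA x) = radical (principal b).
Proof.
move=> SL x.
pose F C := exists2 y, y != 0 /\ colonA x y & C = locset (powers y).
pose B (v : K) := forall C, F C -> C v.
have [T [Tmc BT]] : is_localization B.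
  apply: SL; exists F; split => // _ [y [y_neq0 _] ->].
  by exists (powers y); split => //; apply: powers_mult_closed_nz.
have [|a [t [Tt xE]]] := (BT x).1.
  move=> _ [y [y_neq0 [e ye]] ->]; exists e, y; split; first by exists 1%N; rewrite expr1.
  exact: colonA_divE.
have t_neq0 := mult_closed_nz_neq0 Tmc Tt.
have Bt : B (tofrac t)^-1 by apply/BT/locset_inv.
exists t; apply/seteqP; split => z [n].
  have [zn0 _|zn_neq0 colon_zn] := eqVneq (z ^+ n) 0; first by exists n, 0; rewrite zn0 mul0r.
  apply: (@radicalX _ _ _ n); apply: (locset_powers_inv t_neq0); apply: Bt.
  by exists (z ^+ n); split.
by move=> [c zn]; exists n; rewrite zn xE; apply/colonA_mull/colonA_denom.
Qed.

Lemma localizations_of_colon_radicals_principal :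
  colon_radicals_principal -> sublocalizations_are_localizations.
Proof.
move=> C1 B SLB; have [F [Floc BF]] := SLB.
pose T t := t != 0 /\ B (tofrac t)^-1.
have Tmc : mult_closed_nz T.
  split; first split; first exact: oner_neq0.
    by rewrite tofrac1 invr1 -tofrac1; apply: sublocalization_tofrac.
  split; last by case; rewrite eqxx.
  move=> s t [s_neq0 Bs] [t_neq0 Bt]; split; first exact: mulf_neq0.
  by rewrite tofracM invfM; apply: sublocalization_mul.
exists T; split => // x; split => [Bx|[a [t [[_ Bt] ->]]]]; last first.
  by apply: sublocalization_mul => //; apply: sublocalization_tofrac.
have [[a ->]|xA] := pselect (inA x); first exact: locset_tofrac.
have [b /same_idealE colonE] := C1 x xA.
have b_neq0 : b != 0.
  apply/eqP => b0; have [d d_neq0 /sub_radical] := colonA_neq0 x.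
  by rewrite colonE b0 radical_principal0 => /eqP; apply/negP.
have Tb : T b.
  split => //; apply/BF => C FC; have [S [Smc CS]] := Floc C FC.
  apply/CS/(locset_inv_of_colon Smc); first by apply/CS; exact: (BF x).1 Bx C FC.
  by rewrite -colonE; apply: sub_radical.
have [m [e bme]] : radical (colonA x) b by rewrite colonE; exists 1%N, 1; rewrite expr1 mul1r.
exists e, (b ^+ m); split; first exact: mult_closed_nzX.
by apply: colonA_divE bme; rewrite expf_neq0.
Qed.

Section FinitelyManyAssociatedPrimes.
Hypothesis finA : forall b : A, finitely_many_assoc (principal b).

Lemma colon_radicals_principal_of_assoc_primes :
  assoc_primes_radical_principal -> colon_radicals_principal.
Proof.
move=> C2 x _; have [a [d [d_neq0 ->]]] := fracP x.
have [n [Ps finPs]] := finitely_many_assocP (finA d).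
have [b colonE] : exists b, radical (colon_ideal (principal d) a) = radical (principal b).
  apply: (radical_principal_of_minimal_primes (n := n) (Ps := Ps)) => [|Q Qmin|Q Qmin].
  - exact/colon_ideal_ideal/principal_ideal.
  - by apply: finPs; exists a.
  - by have [c /same_idealE] := C2 d Q (ex_intro _ a Qmin); exists c.
by exists b => z; rewrite colonA_frac // colonE.
Qed.

Lemma assoc_primes_of_colon_radicals_principal :
  colon_radicals_principal -> assoc_primes_radical_principal.
Proof.
move=> C1 b P Pass.
have [b0|b_neq0] := eqVneq b 0.
  by move: Pass; rewrite b0 => /associated_prime_principal0 ->; exists 0.
have [a Pmin] := Pass; have [[_ [nP1 _]] _] := Pmin.
have [n [Ps finPs]] := finitely_many_assocP (finA b).
have [w _ Pw] := minimal_prime_radical_colon (principal_ideal b) Pmin finPs.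
have [|c colonE] := C1 (tofrac (w * a) / tofrac b).
  move=> [e ee]; apply/nP1; rewrite Pw -colonA_frac //; apply: sub_radical.
  by exists e; rewrite tofrac1 mul1r.
by exists c => z; rewrite Pw -colonA_frac.
Qed.

End FinitelyManyAssociatedPrimes.
End Localizations.

Theorem theorem2p5 (A : idomainType) :
  ((forall B : {fraction A} -> Prop, is_sublocalization B -> is_localization B) <->
   (forall x : {fraction A}, ~ inA x ->
      exists b : A, same_ideal (radical (colonA x)) (radical (principal b))))
  /\
  ((forall b : A, finitely_many_assoc (principal b)) ->
   ((forall B : {fraction A} -> Prop, is_sublocalization B -> is_localization B) <->
    (forall (b : A) (P : A -> Prop), associated_prime (principal b) P ->
       exists c : A, same_ideal P (radical (principal c))))).
Proof.
have C1_of_SL : sublocalizations_are_localizations A -> colon_radicals_principal A.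
  move=> SL x _; have [b colonE] := radical_colonA_principal_of_localizations SL x.
  by exists b => z; rewrite colonE.
split; first by split; [exact: C1_of_SL | exact: localizations_of_colon_radicals_principal].
move=> finA; split => [SL|C2].
  exact/(assoc_primes_of_colon_radicals_principal finA)/C1_of_SL.
exact/localizations_of_colon_radicals_principal/(colon_radicals_principal_of_assoc_primes finA).
Qed.
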